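(* Let $k\in\frac12\mathbb{Z}_{>0}$. The set of monomials \[ \prod_{a=1}^n\phi_a^{p_a}(\phi_a^* )^{d_a}\omega_a^{v_a}\qquad(\text{factors in the order } a=1,\dots,n), \] with $p_a,d_a\in\{0,1\}$ and $v_a\in\{0,1,\dots,2k-1\}$, is a $\mathbb{k}$-basis of $\mathrm{Cl}_q(n,k)$.
   Context: Let $\mathbb{k}$ be a field of characteristic different from $2$, $q\in\mathbb{k}^\times$, $n$ a positive integer and $k\in\frac12\mathbb{Z}_{>0}$ (so $2k$ is a positive integer). Here $\mathrm{Cl}_q(n,k)$ is the unital associative $\mathbb{k}$-algebra generated by $\omega_a,\phi_a,\phi_a^*$ ($a=1,\dots,n$) subject to, for all $a,b$: $\omega_a\omega_b=\omega_b\omega_a$; $\omega_a^{4k}=(1+q^{-2k})\omega_a^{2k}-q^{-2k}$; $\omega_a\phi_b=q^{\delta_{ab}}\phi_b\omega_a$; $\omega_a\phi_b^*=q^{-\delta_{ab}}\phi_b^*\omega_a$; $\phi_a\phi_b+\phi_b\phi_a=0$; $\phi_a^*\phi_b^*+\phi_b^*\phi_a^*=0$; $\phi_a\phi_a^*+\phi_a^*\phi_a=1$; $\phi_a\phi_a^*+q^{-2k}\phi_a^*\phi_a=\omega_a^{2k}$; $\phi_a\phi_b^*+\phi_b^*\phi_a=0$ if $a\neq b$. (For integer $k$ this is a presentation of the algebra with generators $\psi_a,\psi_a^*,\omega_a^{\pm1}$ and relations $\omega_a\psi_b=q^{\delta_{ab}}\psi_b\omega_a$, $\omega_a\psi_b^*=q^{-\delta_{ab}}\psi_b^*\omega_a$,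 $\psi$'s and $\psi^*$'s pairwise anticommuting except $\psi_a\psi_a^*+q^{\pm k}\psi_a^*\psi_a=\omega_a^{\mp k}$, via $\phi_a=\psi_a$, $\phi_a^*=\psi_a^*\omega_a^k$.) *)

(* The algebra Cl_q(n,k) is presented by generators and
   relations; we realise it as the free associative K-algebra on the
   generators (formal finite K-linear combinations of words, compared
   coefficientwise) modulo the two-sided ideal generated by the relations. *)
From HB Require Import structures.
From mathcomp Require Import all_boot all_order all_algebra.
Set Implicit Arguments. Unset Strict Implicit. Unset Printing Implicit Defensive.
Import Order.TTheory GRing.Theory Num.Theory.
Local Open Scope ring_scope.

(* Generators omega_a, phi_a, phi*_a, a : 'I_n (index a is 0-based). *)
Inductive gen (n : nat) := Om of 'I_n | Ph of 'I_n | Ps of 'I_n.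

Definition gen_enc n (g : gen n) : 'I_n + 'I_n + 'I_n :=
  match g with Om a => inl (inl a) | Ph a => inl (inr a) | Ps a => inr a end.
Definition gen_dec n (x : 'I_n + 'I_n + 'I_n) : gen n :=
  match x with inl (inl a) => Om a | inl (inr a) => Ph a | inr a => Ps a end.
Lemma gen_encK n : cancel (@gen_enc n) (@gen_dec n).
Proof. by case. Qed.
HB.instance Definition _ n := Equality.copy (gen n) (can_type (@gen_encK n)).

Section FreeAlg.
Variables (K : fieldType) (n : nat).

Definition word := seq (gen n).
Definition fpoly := seq (K * word).

Definition fcoef (p : fpoly) (w : word) : K :=
  \sum_(x <- p) (if x.2 == w then x.1 else 0).

Definition fscale (c : K) (p : fpoly) : fpoly := [seq (c * x.1, x.2) | x <- p].
Definition fadd (p r : fpoly) : fpoly := p ++ r.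
Definition fsub (p r : fpoly) : fpoly := p ++ fscale (-1) r.
Definition fsandwich (u : word) (p : fpoly) (v : word) : fpoly :=
  [seq (x.1, u ++ x.2 ++ v) | x <- p].
Definition fmono (w : word) : fpoly := [:: (1, w)].
Definition fone : fpoly := fmono [::].

Definition feq (p r : fpoly) : Prop := forall w, fcoef p w = fcoef r w.

Definition in_ideal (rel : fpoly -> Prop) (p : fpoly) : Prop :=
  exists s : seq (K * word * fpoly * word),
    (forall t, t \in s -> rel t.1.2) /\
    feq p (flatten [seq fscale t.1.1.1 (fsandwich t.1.1.2 t.1.2 t.2) | t <- s]).
End FreeAlg.

Section Clq.
Variables (K : fieldType) (q : K) (n m : nat).
(* m stands for 2k (a positive integer). *)

Local Notation word := (word n).
Local Notation fpoly := (fpoly K n).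
Local Notation fmo := (@fmono K n).
Local Notation fon := (@fone K n).

Definition w2 (x y : gen n) : word := [:: x; y].
Definition Omp (a : 'I_n) (e : nat) : word := nseq e (Om a).

(* Defining relations of Cl_q(n,k), each written as "lhs - rhs". *)
Definition Clq_rel (r : fpoly) : Prop :=
  exists a b : 'I_n,
     r = fsub (fmo (w2 (Om a) (Om b))) (fmo (w2 (Om b) (Om a)))
  \/ r = fsub (fmo (Omp a (2 * m)))
              (fadd (fscale (1 + q ^- m) (fmo (Omp a m))) (fscale (- q ^- m) fon))
  \/ r = fsub (fmo (w2 (Om a) (Ph b)))
              (fscale (if a == b then q else 1) (fmo (w2 (Ph b) (Om a))))
  \/ r = fsub (fmo (w2 (Om a) (Ps b)))
              (fscale (if a == b then q^-1 else 1) (fmo (w2 (Ps b) (Om a))))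
  \/ r = fadd (fmo (w2 (Ph a) (Ph b))) (fmo (w2 (Ph b) (Ph a)))
  \/ r = fadd (fmo (w2 (Ps a) (Ps b))) (fmo (w2 (Ps b) (Ps a)))
  \/ r = fsub (fadd (fmo (w2 (Ph a) (Ps a))) (fmo (w2 (Ps a) (Ph a)))) fon
  \/ r = fsub (fadd (fmo (w2 (Ph a) (Ps a)))
                    (fscale (q ^- m) (fmo (w2 (Ps a) (Ph a)))))
              (fmo (Omp a m))
  \/ (a != b /\ r = fadd (fmo (w2 (Ph a) (Ps b))) (fmo (w2 (Ps b) (Ph a)))).

Definition Clq_ideal (p : fpoly) : Prop := in_ideal Clq_rel p.

(* Index of a PBW monomial: for each a, (p_a, d_a, v_a) with p_a,d_a in {0,1}
   and v_a in {0,...,m-1}. *)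
Definition pbw_index := {ffun 'I_n -> bool * bool * 'I_m}.

Definition pbw_word (i : pbw_index) : word :=
  flatten [seq nseq (i a).1.1 (Ph a) ++ nseq (i a).1.2 (Ps a) ++ Omp a (i a).2
          | a <- enum 'I_n].

Definition pbw_comb (c : {ffun pbw_index -> K}) : fpoly :=
  flatten [seq fscale (c i) (fmo (pbw_word i)) | i <- enum pbw_index].

Definition pbw_is_basis : Prop :=
  (forall f : fpoly, exists c : {ffun pbw_index -> K},
      Clq_ideal (fsub f (pbw_comb c))) /\
  (forall c : {ffun pbw_index -> K},
      Clq_ideal (pbw_comb c) -> forall i, c i = 0).
End Clq.

(* Spanning: modulo the relations, a generator moves past the factors of the other
   sites at the cost of a scalar, and on its own site phi_a^2 = phi*_a^2 = 0 (from
   the anticommutation relations, as 2 is invertible), phi*_a phi_a = 1 - phi_a phi*_a,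
   omega_a phi_a = q phi_a omega_a, omega_a phi*_a = q^-1 phi*_a omega_a and
   omega_a^2k = phi_a phi*_a + q^-2k phi*_a phi_a = 1 - (1 - q^-2k) phi*_a phi_a
   bring the product back to the span of the factors phi_a^p phi*_a^d omega_a^v,
   v < 2k.  So left multiplication by generators preserves the span of the ordered
   monomials, which contains 1.
   Independence: Cl_q(n,k) acts on functions of states, a state giving each site a
   filled/empty bit and an exponent of omega_a modulo 2k; phi_a fills and phi*_a
   empties a site with the Jordan-Wigner sign (-1)^(filled sites before it), and
   omega_a advances the exponent with weight q^-1 on filled sites.  Evaluating at
   suitable probes makes the ordered monomials triangular. *)

From HB Require Import structures.
From mathcomp Require Import all_boot all_order all_algebra.
From mathcomp Require Import ring.
Set Implicit Arguments. Unset Strict Implicit. Unset Printing Implicit Defensive.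
Import Order.TTheory GRing.Theory Num.Theory.
Local Open Scope ring_scope.

(** * Formal sums modulo a two-sided ideal *)

Section FreeAlgebra.
Variables (K : fieldType) (n : nat).
Local Notation word := (word n).
Local Notation fpoly := (fpoly K n).

Definition flin (F : word -> K) (p : fpoly) : K := \sum_(x <- p) x.1 * F x.2.

Lemma flin_nil F : flin F [::] = 0.
Proof. by rewrite /flin big_nil. Qed.

Lemma flin_cons F x (p : fpoly) : flin F (x :: p) = x.1 * F x.2 + flin F p.
Proof. by rewrite /flin big_cons. Qed.

Lemma flin_cat F (p r : fpoly) : flin F (p ++ r) = flin F p + flin F r.
Proof. by rewrite /flin big_cat. Qed.

Lemma flin_scale F c (p : fpoly) : flin F (fscale c p) = c * flin F p.
Proof.
by rewrite /flin big_map mulr_sumr; apply: eq_bigr => x _; rewrite mulrA.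
Qed.

Lemma flin_mono F (w : word) : flin F (fmono K w) = F w.
Proof. by rewrite /flin big_seq1 mul1r. Qed.

Lemma flin_sandwich F u (p : fpoly) v :
  flin F (fsandwich u p v) = flin (fun w => F (u ++ w ++ v)) p.
Proof. by rewrite /flin big_map. Qed.

Lemma flin_flatten F (ps : seq fpoly) : flin F (flatten ps) = \sum_(p <- ps) flin F p.
Proof.
by elim: ps => [|p ps IH]; rewrite ?big_nil ?flin_nil //= flin_cat IH big_cons.
Qed.

Lemma fcoef_flin (p : fpoly) w : fcoef p w = flin (fun w' => (w' == w)%:R) p.
Proof. by apply: eq_bigr => x _; case: eqP; rewrite ?mulr1 ?mulr0. Qed.

Lemma fcoef_nil w : fcoef ([::] : fpoly) w = 0.
Proof. exact: big_nil. Qed.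

Lemma fcoef_cons (x : K * word) (p : fpoly) w :
  fcoef (x :: p) w = x.1 * (x.2 == w)%:R + fcoef p w.
Proof. by rewrite !fcoef_flin flin_cons. Qed.

Lemma fcoef_mono (w0 w : word) : fcoef (fmono K w0) w = (w0 == w)%:R.
Proof. by rewrite fcoef_flin flin_mono. Qed.

Lemma fcoef_cat (p r : fpoly) w : fcoef (p ++ r) w = fcoef p w + fcoef r w.
Proof. by rewrite !fcoef_flin flin_cat. Qed.

Lemma fcoef_scale c (p : fpoly) w : fcoef (fscale c p) w = c * fcoef p w.
Proof. by rewrite !fcoef_flin flin_scale. Qed.

Lemma fcoef_add (p r : fpoly) w : fcoef (fadd p r) w = fcoef p w + fcoef r w.
Proof. exact: fcoef_cat. Qed.

Lemma fcoef_sub (p r : fpoly) w : fcoef (fsub p r) w = fcoef p w - fcoef r w.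
Proof. by rewrite fcoef_cat fcoef_scale mulN1r. Qed.

Definition fcoefE :=
  (fcoef_nil, fcoef_mono, fcoef_scale, fcoef_add, fcoef_sub, fcoef_cat, fcoef_cons).

Lemma feq_flin F (p r : fpoly) : feq p r -> flin F p = flin F r.
Proof.
move=> eq_pr; pose s := undup (map snd (p ++ r)).
suff flinE : forall t : fpoly,
    {subset map snd t <= s} -> flin F t = \sum_(w <- s) fcoef t w * F w.
  have sub_s t : {subset t <= p ++ r} -> {subset map snd t <= s}.
    by move=> sub_t _ /mapP [x xt ->]; rewrite mem_undup map_f ?sub_t.
  rewrite (flinE p) ?(flinE r); first by apply: eq_bigr => w _; rewrite eq_pr.
    by apply: sub_s => x xr; rewrite mem_cat xr orbT.
  by apply: sub_s => x xp; rewrite mem_cat xp.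
elim=> [|[c w] t IH] /= sub_t.
  by rewrite flin_nil big1 // => w _; rewrite fcoef_flin flin_nil mul0r.
have ws : w \in s by rewrite sub_t ?mem_head.
rewrite flin_cons IH => [|w' w't]; last by rewrite sub_t // inE w't orbT.
under eq_bigr do rewrite fcoef_flin flin_cons -fcoef_flin mulrDl.
rewrite big_split; congr (_ + _).
rewrite (bigD1_seq w) ?undup_uniq //= eqxx mulr1 big1 ?addr0 // => w' /negbTE.
by rewrite eq_sym => ->; rewrite mulr0 mul0r.
Qed.

Lemma feq_sandwich u (p r : fpoly) v : feq p r -> feq (fsandwich u p v) (fsandwich u r v).
Proof. by move=> eq_pr w; rewrite !fcoef_flin !flin_sandwich (feq_flin _ eq_pr). Qed.

End FreeAlgebra.

Section Ideal.
Variables (K : fieldType) (n : nat) (rel : fpoly K n -> Prop).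
Local Notation word := (word n).
Local Notation fpoly := (fpoly K n).
Local Notation ideal := (in_ideal rel).

Lemma ideal_feq (p r : fpoly) : feq p r -> ideal r -> ideal p.
Proof. by move=> eq_pr [s [rel_s eq_r]]; exists s; split => // w; rewrite eq_pr eq_r. Qed.

Lemma ideal_nil : ideal [::].
Proof. by exists [::]. Qed.

Lemma ideal_rel (r : fpoly) : rel r -> ideal r.
Proof.
move=> rel_r; exists [:: (1, [::], r, [::])]; split; first by move=> t /[!inE] /eqP ->.
move=> w; rewrite /= cats0 fcoef_scale mul1r /fsandwich map_id_in // => -[c x] _ /=.
by rewrite cats0.
Qed.

Lemma ideal_add (p r : fpoly) : ideal p -> ideal r -> ideal (fadd p r).
Proof.
move=> [s1 [rel_s1 eq_p]] [s2 [rel_s2 eq_r]]; exists (s1 ++ s2); split.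
  by move=> t; rewrite mem_cat => /orP [/rel_s1 | /rel_s2].
by move=> w; rewrite map_cat flatten_cat fcoef_add fcoef_cat eq_p eq_r.
Qed.

Lemma ideal_scale c (p : fpoly) : ideal p -> ideal (fscale c p).
Proof.
move=> [s [rel_s eq_p]]; exists [seq (c * t.1.1.1, t.1.1.2, t.1.2, t.2) | t <- s]; split.
  by move=> _ /mapP [t ts ->]; exact: rel_s t ts.
move=> w; rewrite fcoef_scale eq_p !fcoef_flin !flin_flatten !big_map mulr_sumr.
by apply: eq_bigr => t _; rewrite !flin_scale mulrA.
Qed.

Lemma ideal_sandwich u (p : fpoly) v : ideal p -> ideal (fsandwich u p v).
Proof.
move=> [s [rel_s eq_p]]; exists [seq (t.1.1.1, u ++ t.1.1.2, t.1.2, t.2 ++ v) | t <- s].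
split; first by move=> _ /mapP [t ts ->]; exact: rel_s t ts.
move=> w; rewrite (feq_sandwich u v eq_p) /fsandwich map_flatten -!map_comp.
congr (fcoef (flatten _) w); apply: eq_map => t /=.
by rewrite /fscale -!map_comp; apply: eq_map => x /=; rewrite !catA.
Qed.

Definition fcong (p r : fpoly) : Prop := ideal (fsub p r).

Lemma fcong_feq (p p' r r' : fpoly) : feq p p' -> feq r r' -> fcong p' r' -> fcong p r.
Proof. by move=> eq_p eq_r; apply: ideal_feq => w; rewrite !fcoef_sub eq_p eq_r. Qed.

Lemma feq_fcong (p r : fpoly) : feq p r -> fcong p r.
Proof.
by move=> eq_pr; apply: ideal_feq ideal_nil => w; rewrite fcoef_sub eq_pr subrr fcoef_nil.
Qed.

Lemma fcong_refl (p : fpoly) : fcong p p.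
Proof. exact: feq_fcong. Qed.

Lemma fcong_trans (p r t : fpoly) : fcong p r -> fcong r t -> fcong p t.
Proof.
by move=> c1 c2; apply: ideal_feq (ideal_add c1 c2) => w; rewrite !fcoefE; ring.
Qed.

Lemma fcong_add (p r p' r' : fpoly) :
  fcong p r -> fcong p' r' -> fcong (fadd p p') (fadd r r').
Proof.
by move=> c1 c2; apply: ideal_feq (ideal_add c1 c2) => w; rewrite !fcoefE; ring.
Qed.

Lemma fcong_scale c (p r : fpoly) : fcong p r -> fcong (fscale c p) (fscale c r).
Proof. by move/(ideal_scale c); apply: ideal_feq => w; rewrite !fcoefE; ring. Qed.

Lemma fcong_sandwich u v (p r : fpoly) :
  fcong p r -> fcong (fsandwich u p v) (fsandwich u r v).
Proof.
by move/(ideal_sandwich u v); rewrite /fcong /fsub /fsandwich /fscale map_cat -!map_comp.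
Qed.

Lemma ideal_add_fcong (p r : fpoly) : ideal (fadd p r) -> fcong p (fscale (-1) r).
Proof. by apply: ideal_feq => w; rewrite !fcoefE; ring. Qed.

Section Span.
Variables (T : Type) (B : T -> word).

Definition fspan (p : fpoly) : Prop :=
  exists l : seq (K * T), fcong p [seq (x.1, B x.2) | x <- l].

Lemma fspan_fcong (p r : fpoly) : fcong p r -> fspan r -> fspan p.
Proof. by move=> c_pr [l c_r]; exists l; apply: fcong_trans c_r. Qed.

Lemma fspan_feq (p r : fpoly) : feq p r -> fspan r -> fspan p.
Proof. by move/feq_fcong; apply: fspan_fcong. Qed.

Lemma fspan_nil : fspan [::].
Proof. by exists [::]; apply: fcong_refl. Qed.

Lemma fspan_basis y : fspan (fmono K (B y)).
Proof. by exists [:: (1, y)]; apply: fcong_refl. Qed.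

Lemma fspan_add (p r : fpoly) : fspan p -> fspan r -> fspan (fadd p r).
Proof. by move=> [l c_p] [l' c_r]; exists (l ++ l'); rewrite map_cat; apply: fcong_add. Qed.

Lemma fspan_scale c (p : fpoly) : fspan p -> fspan (fscale c p).
Proof.
move=> [l c_p]; exists [seq (c * x.1, x.2) | x <- l].
by move/(fcong_scale c): c_p; rewrite /fscale -!map_comp.
Qed.

Lemma fspan_sub (p r : fpoly) : fspan p -> fspan r -> fspan (fsub p r).
Proof. by move=> sp sr; apply: fspan_add sp (fspan_scale _ sr). Qed.

Lemma fspan_lmul g : (forall y, fspan (fmono K (g :: B y))) ->
  forall p, fspan p -> fspan (fsandwich [:: g] p [::]).
Proof.
move=> span_gB p [l c_p]; apply: fspan_fcong (fcong_sandwich _ _ c_p) _.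
elim: l {c_p} => [|[c y] l IH]; first exact: fspan_nil.
apply: fspan_feq (fspan_add (fspan_scale c (span_gB y)) IH).
by move=> w; rewrite /= cats0 !fcoefE mulr1.
Qed.

Lemma fspan_mono_cons g w : (forall y, fspan (fmono K (g :: B y))) ->
  fspan (fmono K w) -> fspan (fmono K (g :: w)).
Proof. by move=> span_gB /(fspan_lmul span_gB); apply: fspan_feq => w'; rewrite /= cats0. Qed.

Lemma fspan_all : (exists y, B y = [::]) -> (forall g y, fspan (fmono K (g :: B y))) ->
  forall p, fspan p.
Proof.
move=> [y0 B_y0] span_gB.
have span_word w : fspan (fmono K w).
  by elim: w => [|g w]; [rewrite -B_y0; apply: fspan_basis | apply: fspan_mono_cons].
elim=> [|[c w] p IH]; first exact: fspan_nil.
apply: (@fspan_feq _ (fadd (fscale c (fmono K w)) p)); first by move=> w'; rewrite !fcoefE.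
exact: fspan_add (fspan_scale _ (span_word w)) IH.
Qed.

End Span.

Lemma fspan_sandwich (T1 T2 : Type) (B1 : T1 -> word) (B2 : T2 -> word) (f : T1 -> T2) u v p :
  (forall y, B2 (f y) = u ++ B1 y ++ v) -> fspan B1 p -> fspan B2 (fsandwich u p v).
Proof.
move=> B2f [l c_p]; exists [seq (x.1, f x.2) | x <- l].
move/(fcong_sandwich u v): c_p; rewrite /fsandwich -!map_comp.
by congr fcong; apply: eq_map => x /=; rewrite B2f.
Qed.

Lemma fspan_fin (T : finType) (B : T -> word) p : fspan B p ->
  exists c : {ffun T -> K}, fcong p (flatten [seq fscale (c y) (fmono K (B y)) | y <- enum T]).
Proof.
case=> l c_p; exists [ffun y => \sum_(x <- l) (if x.2 == y then x.1 else 0)].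
apply: (fcong_trans c_p); apply: feq_fcong => w.
rewrite !fcoef_flin flin_flatten big_map.
under [RHS]eq_bigr => y _ do rewrite flin_scale flin_mono ffunE mulr_suml.
rewrite /flin big_map /= exchange_big /=; apply: eq_bigr => x _.
rewrite (bigD1_seq x.2) ?mem_enum ?enum_uniq //= eqxx big1 ?addr0 // => y /negbTE.
by rewrite eq_sym => ->; rewrite mul0r.
Qed.

End Ideal.

Arguments fspan_nil {K n rel T B}.
Arguments fspan_basis {K n rel T B}.

(** * The ordered monomials span *)

Definition site n (g : gen n) : 'I_n := match g with Om a | Ph a | Ps a => a end.

Definition odd_gen n (g : gen n) : bool := if g is Om _ then false else true.

Definition swap_sign {R : nzRingType} {n} (g h : gen n) : R :=
  if odd_gen g && odd_gen h then -1 else 1.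

Definition pbw_block n m (a : 'I_n) (y : bool * bool * 'I_m) : word n :=
  nseq y.1.1 (Ph a) ++ nseq y.1.2 (Ps a) ++ Omp a y.2.

Lemma pbw_wordE n m (i : pbw_index n m) :
  pbw_word i = flatten [seq pbw_block a (i a) | a <- enum 'I_n].
Proof. by []. Qed.

Definition pbw_upd n m (i : pbw_index n m) (a : 'I_n) (y : bool * bool * 'I_m) :
  pbw_index n m := [ffun c => if c == a then y else i c].

Lemma pbw_upd_id n m (i : pbw_index n m) a : pbw_upd i a (i a) = i.
Proof. by apply/ffunP => c; rewrite ffunE; case: eqP => // ->. Qed.

Lemma pbw_word_split n m (i : pbw_index n m) (a : 'I_n) : exists L R : word n,
  (forall y : bool * bool * 'I_m, pbw_word (pbw_upd i a y) = L ++ pbw_block a y ++ R) /\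
  {in L, forall h, site h != a}.
Proof.
suff : forall s, uniq s -> a \in s -> exists L R : word n,
    (forall y, flatten [seq pbw_block c (pbw_upd i a y c) | c <- s] = L ++ pbw_block a y ++ R) /\
    {in L, forall h, site h != a}.
  by move/(_ (enum 'I_n) (enum_uniq _)); rewrite mem_enum; apply.
move=> s uniq_s /splitPr split_s; case: split_s uniq_s => s1 s2.
rewrite cat_uniq /= => /and4P [_ /norP [a_s1 _] a_s2 _].
exists (flatten [seq pbw_block c (i c) | c <- s1]), (flatten [seq pbw_block c (i c) | c <- s2]).
split=> [y | h /flattenP [_ /mapP [c c_s1 ->]]].
  rewrite map_cat flatten_cat /= ffunE eqxx.
  by congr (flatten _ ++ _ ++ flatten _); apply/eq_in_map => c c_s;
    rewrite ffunE; case: eqP => // ca; [move: a_s1 | move: a_s2]; rewrite -ca c_s.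
rewrite !mem_cat !mem_nseq => h_c.
have -> : site h = c by case/orP: h_c => [|/orP []] /andP [_ /eqP ->].
by apply: contraNneq a_s1 => <-.
Qed.

Section Spanning.
Variables (K : fieldType) (q : K) (n m : nat).
Hypotheses (two_neq0 : (2%:R : K) != 0) (m_gt0 : (0 < m)%N).
Local Notation word := (word n).
Local Notation fpoly := (fpoly K n).
Local Notation fmo := (@fmono K n).
Local Notation ideal := (in_ideal (Clq_rel q m)).
Local Notation cong := (fcong (Clq_rel q m)).
Implicit Types (a b : 'I_n) (y : bool * bool * 'I_m) (g h : gen n) (u v t : word).

Lemma Clq_OmOm a b : cong (fmo [:: Om a; Om b]) (fmo [:: Om b; Om a]).
Proof. by apply: ideal_rel; exists a, b; left. Qed.

Lemma Clq_OmPh a b :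
  cong (fmo [:: Om a; Ph b]) (fscale (if a == b then q else 1) (fmo [:: Ph b; Om a])).
Proof. by apply: ideal_rel; exists a, b; do 2 right; left. Qed.

Lemma Clq_OmPs a b :
  cong (fmo [:: Om a; Ps b]) (fscale (if a == b then q^-1 else 1) (fmo [:: Ps b; Om a])).
Proof. by apply: ideal_rel; exists a, b; do 3 right; left. Qed.

Lemma Clq_PhPh a b : cong (fmo [:: Ph a; Ph b]) (fscale (-1) (fmo [:: Ph b; Ph a])).
Proof. by apply/ideal_add_fcong/ideal_rel; exists a, b; do 4 right; left. Qed.

Lemma Clq_PsPs a b : cong (fmo [:: Ps a; Ps b]) (fscale (-1) (fmo [:: Ps b; Ps a])).
Proof. by apply/ideal_add_fcong/ideal_rel; exists a, b; do 5 right; left. Qed.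

Lemma Clq_PhPs_far a b : a != b -> cong (fmo [:: Ph a; Ps b]) (fscale (-1) (fmo [:: Ps b; Ph a])).
Proof. by move=> ab; apply/ideal_add_fcong/ideal_rel; exists a, b; do 8 right. Qed.

Lemma Clq_clifford a : cong (fmo [:: Ps a; Ph a]) (fsub (fone K n) (fmo [:: Ph a; Ps a])).
Proof.
apply: ideal_feq (ideal_rel _); last by exists a, a; do 6 right; left.
by move=> w; rewrite !fcoefE; ring.
Qed.

Lemma Clq_Om_pow_m a :
  cong (fmo (Omp a m)) (fsub (fone K n) (fscale (1 - q ^- m) (fmo [:: Ps a; Ph a]))).
Proof.
have [r7 r8] : Clq_rel q m (fsub (fadd (fmo [:: Ph a; Ps a]) (fmo [:: Ps a; Ph a])) (fone K n))
    /\ Clq_rel q m (fsub (fadd (fmo [:: Ph a; Ps a]) (fscale (q ^- m) (fmo [:: Ps a; Ph a])))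
                         (fmo (Omp a m))).
  by split; exists a, a; [do 6 right | do 7 right]; left.
apply: ideal_feq (ideal_add (ideal_rel r7) (ideal_scale (-1) (ideal_rel r8))).
by move=> w; rewrite !fcoefE; ring.
Qed.

Lemma Clq_odd_square g : odd_gen g -> cong (fmo [:: g; g]) [::].
Proof.
have half_sq (p : fpoly) : cong p (fscale (-1) p) -> cong p [::].
  by move/(ideal_scale 2%:R^-1); apply: ideal_feq => w; rewrite !fcoefE; field.
by case: g => // a _; apply: half_sq; [apply: Clq_PhPh | apply: Clq_PsPs].
Qed.

Lemma Clq_swap g h : site g != site h ->
  cong (fmo [:: g; h]) (fscale (swap_sign g h) (fmo [:: h; g])).
Proof.
case: g => a; case: h => b /= ab; have ba : (b == a) = false by rewrite eq_sym (negbTE ab).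
all: [> apply: ideal_feq (Clq_OmOm a b)
     | apply: ideal_feq (Clq_OmPh a b)
     | apply: ideal_feq (Clq_OmPs a b)
     | apply: ideal_feq (ideal_scale (-1) (Clq_OmPh b a))
     | apply: ideal_feq (Clq_PhPh a b)
     | apply: ideal_feq (Clq_PhPs_far ab)
     | apply: ideal_feq (ideal_scale (-1) (Clq_OmPs b a))
     | apply: ideal_feq (Clq_PhPs_far (negbT ba))
     | apply: ideal_feq (Clq_PsPs a b) ].
all: by move=> w; rewrite ?ba ?(negbTE ab) !fcoefE /swap_sign /=; ring.
Qed.

Definition skew_comm g h : Prop := exists e, cong (fmo [:: g; h]) (fscale e (fmo [:: h; g])).

Lemma skew_comm_far g h : site g != site h -> skew_comm g h.
Proof. by move=> gh; exists (swap_sign g h); apply: Clq_swap. Qed.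

Lemma skew_comm_Om a g : site g = a -> odd_gen g -> skew_comm (Om a) g.
Proof.
case: g => // b <- _; [exists q; have := Clq_OmPh b b | exists q^-1; have := Clq_OmPs b b].
all: by rewrite eqxx.
Qed.

Lemma skew_comm_word g (u t : word) : {in u, forall h, skew_comm g h} ->
  exists e, cong (fmo (g :: u ++ t)) (fscale e (fmo (u ++ g :: t))).
Proof.
elim: u => [|h u IH] comm_u.
  by exists 1; apply: feq_fcong => w; rewrite !fcoefE mul1r.
have [e pass_u] : exists e, cong (fmo (g :: u ++ t)) (fscale e (fmo (u ++ g :: t))).
  by apply: IH => h' h'u; apply: comm_u; rewrite inE h'u orbT.
have [e' comm_gh] := comm_u h (mem_head h u).
exists (e' * e).
apply: fcong_trans (fcong_sandwich [::] (u ++ t) comm_gh) _.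
apply: fcong_feq (fcong_scale e' (fcong_sandwich [:: h] [::] pass_u)).
  by move=> w; rewrite /= !cats0 !fcoefE.
by move=> w; rewrite /= !cats0 !fcoefE mulrA.
Qed.

Local Notation block_span a := (fspan (Clq_rel q m) (@pbw_block n m a)).

Lemma Ph_block_span a y : block_span a (fmo (Ph a :: pbw_block a y)).
Proof.
case: y => [[[] d] v]; last exact: (fspan_basis (true, d, v)).
apply: fspan_fcong fspan_nil.
exact: (fcong_sandwich [::] (nseq d (Ps a) ++ Omp a v) (@Clq_odd_square (Ph a) isT)).
Qed.

Lemma Ps_block_span a y : block_span a (fmo (Ps a :: pbw_block a y)).
Proof.
have PsPh_ctx v : cong (fmo [:: Ps a, Ph a & v]) (fsub (fmo v) (fmo [:: Ph a, Ps a & v])).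
  exact: (fcong_sandwich [::] v (Clq_clifford a)).
have PsPs_ctx u v : cong (fmo (u ++ [:: Ps a, Ps a & v])) [::].
  exact: (fcong_sandwich u v (@Clq_odd_square (Ps a) isT)).
case: y => [[[] []] v]; rewrite /pbw_block /=.
- apply: fspan_fcong (PsPh_ctx _) _.
  apply: fspan_sub; first exact: (fspan_basis (false, true, v)).
  exact: fspan_fcong (PsPs_ctx [:: Ph a] _) fspan_nil.
- apply: fspan_fcong (PsPh_ctx _) _.
  apply: fspan_sub; first exact: (fspan_basis (false, false, v)).
  exact: (fspan_basis (true, true, v)).
- exact: fspan_fcong (PsPs_ctx [::] _) fspan_nil.
- exact: (fspan_basis (false, true, v)).
Qed.

Lemma PhPs_word_span a w : all (fun g => (g == Ph a) || (g == Ps a)) w -> block_span a (fmo w).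
Proof.
elim: w => [|g w IH] /=; first by move=> _; exact: (fspan_basis (false, false, Ordinal m_gt0)).
case/andP => /orP [] /eqP -> /IH; apply: fspan_mono_cons.
  exact: Ph_block_span.
exact: Ps_block_span.
Qed.

Lemma Om_pow_block_span a (p d : bool) k : (k <= m)%N ->
  block_span a (fmo (nseq p (Ph a) ++ nseq d (Ps a) ++ Omp a k)).
Proof.
rewrite leq_eqVlt => /orP [/eqP -> | k_lt_m]; last exact: (fspan_basis (p, d, Ordinal k_lt_m)).
rewrite catA; set u := nseq p (Ph a) ++ nseq d (Ps a).
have PhPs_u : all (fun g => (g == Ph a) || (g == Ps a)) u.
  by rewrite all_cat !all_nseq /= !eqxx ?orbT.
rewrite -(cats0 (Omp a m)); apply: fspan_fcong (fcong_sandwich u [::] (Clq_Om_pow_m a)) _.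
apply: (@fspan_feq _ _ _ _ _ _ (fsub (fmo u) (fscale (1 - q ^- m) (fmo (u ++ [:: Ps a; Ph a]))))).
  by move=> w; rewrite /= !cats0 !fcoefE; ring.
apply: fspan_sub; first exact: PhPs_word_span.
by apply/fspan_scale/PhPs_word_span; rewrite all_cat PhPs_u /= !eqxx ?orbT.
Qed.

Lemma Om_block_span a y : block_span a (fmo (Om a :: pbw_block a y)).
Proof.
case: y => [[p d] v]; rewrite [pbw_block a _]/pbw_block catA.
have comm_Om : {in nseq p (Ph a) ++ nseq d (Ps a), forall g, skew_comm (Om a) g}.
  by move=> g; rewrite mem_cat !mem_nseq; case/orP => /andP [_ /eqP ->]; apply: skew_comm_Om.
have [e pass] := skew_comm_word (Omp a v) comm_Om.
apply: fspan_fcong pass _; apply: fspan_scale; rewrite -catA.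
exact: (Om_pow_block_span a p d (ltn_ord v)).
Qed.

Lemma gen_block_span g y : block_span (site g) (fmo (g :: pbw_block (site g) y)).
Proof. by case: g => a; [apply: Om_block_span | apply: Ph_block_span | apply: Ps_block_span]. Qed.

Lemma gen_pbw_span g (i : pbw_index n m) :
  fspan (Clq_rel q m) (@pbw_word n m) (fmo (g :: pbw_word i)).
Proof.
have [L [R [split_i far_L]]] := pbw_word_split i (site g).
rewrite -(pbw_upd_id i (site g)) split_i.
have comm_L : {in L, forall h, skew_comm g h}.
  by move=> h hL; apply: skew_comm_far; rewrite eq_sym far_L.
have [e pass] := skew_comm_word (pbw_block (site g) (i (site g)) ++ R) comm_L.
apply: fspan_fcong pass _; apply: fspan_scale.
exact: fspan_sandwich split_i (gen_block_span g _).
Qed.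

Lemma pbw_spanning (f : fpoly) : exists c : {ffun pbw_index n m -> K}, cong f (pbw_comb c).
Proof.
apply: fspan_fin; apply: fspan_all => [|g i]; last exact: gen_pbw_span.
exists [ffun=> (false, false, Ordinal m_gt0)]; rewrite pbw_wordE.
by elim: (enum 'I_n) => //= c s ->; rewrite ffunE.
Qed.

End Spanning.

(** * A representation separating the ordered monomials *)

Section MonomialAction.
Variables (K : fieldType) (n : nat) (S : Type).
Variables (step : gen n -> S -> S) (weight : gen n -> S -> K).
Implicit Types (w u v : word n) (p r : fpoly K n) (x : S -> K) (s : S).

Fixpoint word_move w s : S := if w is g :: w' then word_move w' (step g s) else s.

Fixpoint word_weight w s : K :=
  if w is g :: w' then weight g s * word_weight w' (step g s) else 1.

(* [word_act w] is the operator by which [w] acts on functions [S -> K] when each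
   letter [g] acts by [x |-> (s |-> weight g s * x (step g s))]. *)
Definition word_act w x s : K := word_weight w s * x (word_move w s).

Definition feval p x s : K := flin (fun w => word_act w x s) p.

Lemma word_actE w x s : word_act w x s = word_weight w s * x (word_move w s).
Proof. by []. Qed.

Lemma word_act_nil x s : word_act [::] x s = x s.
Proof. exact: mul1r. Qed.

Lemma word_move_cat u v s : word_move (u ++ v) s = word_move v (word_move u s).
Proof. by elim: u s => /=. Qed.

Lemma word_weight_cat u v s :
  word_weight (u ++ v) s = word_weight u s * word_weight v (word_move u s).
Proof. by elim: u s => [|g u IH] s /=; rewrite ?mul1r // IH mulrA. Qed.

Lemma word_act_cat u v x s : word_act (u ++ v) x s = word_act u (word_act v x) s.
Proof. by rewrite !word_actE word_move_cat word_weight_cat mulrA. Qed.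

Lemma feval_mono w x s : feval (fmono K w) x s = word_act w x s.
Proof. exact: flin_mono. Qed.

Lemma feval_cat p r x s : feval (p ++ r) x s = feval p x s + feval r x s.
Proof. exact: flin_cat. Qed.

Lemma feval_scale c p x s : feval (fscale c p) x s = c * feval p x s.
Proof. exact: flin_scale. Qed.

Lemma feval_sub p r x s : feval (fsub p r) x s = feval p x s - feval r x s.
Proof. by rewrite feval_cat feval_scale mulN1r. Qed.

Definition fevalE := (feval_mono, feval_scale, feval_sub, feval_cat).

Lemma feval_sandwich u p v x s :
  feval (fsandwich u p v) x s = word_act u (feval p (word_act v x)) s.
Proof.
rewrite /feval flin_sandwich /flin [in RHS]word_actE mulr_sumr; apply: eq_bigr => y _.
by rewrite word_act_cat word_actE word_act_cat mulrCA.
Qed.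

Lemma feval_ideal (rel : fpoly K n -> Prop) :
  (forall r, rel r -> forall x s, feval r x s = 0) ->
  forall p, in_ideal rel p -> forall x s, feval p x s = 0.
Proof.
move=> rel0 p [l [rel_l eq_p]] x s; rewrite /feval (feq_flin _ eq_p) flin_flatten big_map.
rewrite big1_seq // => t /andP [_ t_l].
by rewrite flin_scale -/(feval _ _ _) feval_sandwich word_actE rel0 ?mulr0 //; apply: rel_l.
Qed.

End MonomialAction.

Section CliffordAction.
Variables (K : fieldType) (q : K) (n m : nat).
Hypotheses (q_neq0 : q != 0) (m_gt0 : (0 < m)%N).

Definition state := {ffun 'I_n -> bool * 'I_m}.
Implicit Types (s : state) (a b c : 'I_n) (t : bool * 'I_m) (j : 'I_m) (g h : gen n).

Definition ord_shift j k : 'I_m := Ordinal (ltn_pmod (j + k) m_gt0).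

Definition state_upd s a t : state := [ffun c => if c == a then t else s c].

Definition jw_sign s a : K := \prod_(c < n | (c < a)%N) (if (s c).1 then -1 else 1).

Definition local_move g t : bool * 'I_m :=
  match g with Om _ => (t.1, ord_shift t.2 1) | Ph _ => (true, t.2) | Ps _ => (false, t.2) end.

Definition clq_move g s : state := state_upd s (site g) (local_move g (s (site g))).

Definition clq_weight g s : K :=
  match g with
  | Om a => if (s a).1 then q^-1 else 1
  | Ph a => if (s a).1 then 0 else jw_sign s a
  | Ps a => if (s a).1 then jw_sign s a else 0
  end.

Local Notation act := (word_act clq_move clq_weight).
Local Notation eval := (feval clq_move clq_weight).
Local Notation mv := (word_move clq_move).
Local Notation wt := (word_weight clq_move clq_weight).

Lemma ord_shiftD j k l : ord_shift (ord_shift j k) l = ord_shift j (k + l).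
Proof. by apply: val_inj; rewrite /= modnDml addnA. Qed.

Lemma ord_shift0 j : ord_shift j 0 = j.
Proof. by apply: val_inj; rewrite /= addn0 modn_small. Qed.

Lemma ord_shift_mulm j k : ord_shift j (k * m) = j.
Proof. by apply: val_inj; rewrite /= addnC modnMDl modn_small. Qed.

Lemma state_upd_at s a t : state_upd s a t a = t.
Proof. by rewrite ffunE eqxx. Qed.

Lemma state_upd_other s a t c : c != a -> state_upd s a t c = s c.
Proof. by rewrite ffunE => /negbTE ->. Qed.

Lemma state_upd_id s a : state_upd s a (s a) = s.
Proof. by apply/ffunP => c; rewrite ffunE; case: eqP => // ->. Qed.

Lemma state_upd_self s a t : s a = t -> state_upd s a t = s.
Proof. by move <-; apply: state_upd_id. Qed.

Lemma state_upd_upd s a t t' : state_upd (state_upd s a t) a t' = state_upd s a t'.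
Proof. by apply/ffunP => c; rewrite !ffunE; case: eqP. Qed.

Lemma state_upd_comm s a b t t' : a != b ->
  state_upd (state_upd s a t) b t' = state_upd (state_upd s b t') a t.
Proof.
move=> ab; apply/ffunP => c; rewrite !ffunE.
by case: eqP => [-> | _]; rewrite ?(negbTE ab) // eq_sym (negbTE ab).
Qed.

Lemma jw_sign_upd s c t a :
  jw_sign (state_upd s c t) a = (if (c < a)%N && (t.1 != (s c).1) then -1 else 1) * jw_sign s a.
Proof.
rewrite /jw_sign; have [c_a | a_c] := ltnP c a; last first.
  rewrite mul1r; apply: eq_bigr => c' c'_a; rewrite state_upd_other //.
  by apply: contraTneq c'_a => ->; rewrite -leqNgt.
rewrite (bigD1 c c_a) [in RHS](bigD1 c c_a) state_upd_at mulrA /=.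
congr (_ * _); last by apply: eq_bigr => c' /andP [_ c'c]; rewrite state_upd_other.
by case: t.1; case: (s c).1; rewrite /= ?mulN1r ?opprK ?mul1r.
Qed.

Lemma jw_sign_sqr s a : jw_sign s a * jw_sign s a = 1.
Proof. by rewrite -big_split big1 // => c _; case: (s c).1; rewrite /= ?mulrNN mulr1. Qed.

Lemma clq_move_other g s c : c != site g -> clq_move g s c = s c.
Proof. exact: state_upd_other. Qed.

Lemma clq_move_comm g h s : site g != site h ->
  clq_move g (clq_move h s) = clq_move h (clq_move g s).
Proof.
move=> gh; have hg : site h != site g by rewrite eq_sym.
by rewrite {1 3}/clq_move !clq_move_other // /clq_move state_upd_comm.
Qed.

Lemma clq_weight_move_Om a g s : clq_weight g (clq_move (Om a) s) = clq_weight g s.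
Proof.
have bits c : (clq_move (Om a) s c).1 = (s c).1.
  by rewrite ffunE; case: eqP => // ->.
have sign b : jw_sign (clq_move (Om a) s) b = jw_sign s b.
  by rewrite jw_sign_upd /= eqxx andbF mul1r.
by case: g => b /=; rewrite bits ?sign.
Qed.

Lemma clq_weight_Om_move a h s : site h != a ->
  clq_weight (Om a) (clq_move h s) = clq_weight (Om a) s.
Proof. by move=> ha /=; rewrite clq_move_other // eq_sym. Qed.

Lemma clq_weight_upd_odd g s c t : odd_gen g -> c != site g ->
  clq_weight g (state_upd s c t) =
  (if (c < site g)%N && (t.1 != (s c).1) then -1 else 1) * clq_weight g s.
Proof.
case: g => // a _ /= ca; have ac : a != c by rewrite eq_sym.
all: by rewrite state_upd_other // jw_sign_upd; case: (s a).1; rewrite ?mulr0.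
Qed.

Lemma clq_weight_odd_flip g s : odd_gen g -> clq_weight g s != 0 ->
  (local_move g (s (site g))).1 != (s (site g)).1.
Proof. by case: g => // a _ /=; case: (s a).1; rewrite ?eqxx. Qed.

Lemma clq_weight_swap_odd g h s : odd_gen g -> odd_gen h -> site g != site h ->
  clq_weight g s * clq_weight h (clq_move g s) = - (clq_weight h s * clq_weight g (clq_move h s)).
Proof.
move=> odd_g odd_h gh; have hg : site h != site g by rewrite eq_sym.
rewrite [clq_move g s]/clq_move [clq_move h s]/clq_move !clq_weight_upd_odd //.
have [->|wg] := eqVneq (clq_weight g s) 0; first by rewrite !(mul0r, mulr0) oppr0.
have [->|wh] := eqVneq (clq_weight h s) 0; first by rewrite !(mul0r, mulr0) oppr0.
(* only the sign of the later site sees the flip at the earlier one *)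
rewrite !clq_weight_odd_flip // !andbT.
by case: ltngtP => [_|_|/val_inj eq_gh] /=; [ring | ring | rewrite eq_gh eqxx in gh].
Qed.

Lemma clq_weight_swap g h s : site g != site h ->
  clq_weight g s * clq_weight h (clq_move g s) =
  swap_sign g h * (clq_weight h s * clq_weight g (clq_move h s)).
Proof.
move=> gh; have hg : site h != site g by rewrite eq_sym.
rewrite /swap_sign; case: ifP => [/andP [odd_g odd_h] | even_gh].
  by rewrite clq_weight_swap_odd // mulN1r.
case: g even_gh gh hg => [a | a | a] even_gh gh hg.
  by rewrite clq_weight_move_Om clq_weight_Om_move // mul1r mulrC.
all: case: h even_gh gh hg => // b _ gh hg.
all: by rewrite clq_weight_move_Om clq_weight_Om_move // mul1r mulrC.
Qed.

Lemma act_pair g h x s :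
  act [:: g; h] x s =
  clq_weight g s * clq_weight h (clq_move g s) * x (clq_move h (clq_move g s)).
Proof. by rewrite word_actE /= mulr1. Qed.

Lemma act_swap g h x s : site g != site h ->
  act [:: g; h] x s = swap_sign g h * act [:: h; g] x s.
Proof.
move=> gh; have hg : site h != site g by rewrite eq_sym.
by rewrite !act_pair clq_weight_swap // clq_move_comm // !mulrA.
Qed.

Lemma word_move_Om_pow a k s : mv (Omp a k) s = state_upd s a ((s a).1, ord_shift (s a).2 k).
Proof.
elim: k s => [|k IH] s /=; first by rewrite ord_shift0 -surjective_pairing state_upd_id.
by rewrite IH /clq_move /= state_upd_at state_upd_upd ord_shiftD.
Qed.

Lemma word_weight_Om_pow a k s : wt (Omp a k) s = clq_weight (Om a) s ^+ k.
Proof. by elim: k s => [|k IH] s //=; rewrite IH clq_weight_move_Om exprS. Qed.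

Lemma act_Om_pow_mulm a k x s : act (Omp a (k * m)) x s = clq_weight (Om a) s ^+ (k * m) * x s.
Proof.
rewrite word_actE word_move_Om_pow word_weight_Om_pow ord_shift_mulm.
by rewrite -surjective_pairing state_upd_id.
Qed.

Lemma clq_weight_Om_pow_m a s : clq_weight (Om a) s ^+ m = 1 \/ clq_weight (Om a) s ^+ m = q ^- m.
Proof. by rewrite /=; case: (s a).1; [right; rewrite exprVn | left; rewrite expr1n]. Qed.

Lemma clq_move_Om_comm a g s : clq_move (Om a) (clq_move g s) = clq_move g (clq_move (Om a) s).
Proof.
have [<- | ga] := eqVneq (site g) a; last by rewrite clq_move_comm // eq_sym.
by rewrite /clq_move !state_upd_at !state_upd_upd; case: g.
Qed.

Lemma act_OmPh a x s : act [:: Om a; Ph a] x s = q * act [:: Ph a; Om a] x s.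
Proof.
rewrite !act_pair clq_move_Om_comm clq_weight_move_Om /= state_upd_at /=.
case: (s a).1; first by rewrite !(mul0r, mulr0).
by rewrite mul1r mulrA mulrCA mulfV // mulr1.
Qed.

Lemma act_OmPs a x s : act [:: Om a; Ps a] x s = q^-1 * act [:: Ps a; Om a] x s.
Proof.
rewrite !act_pair clq_move_Om_comm clq_weight_move_Om /= state_upd_at /=.
by case: (s a).1; rewrite ?(mul0r, mulr0) // mulr1 mulrA.
Qed.

Lemma act_PhPs a x s : act [:: Ph a; Ps a] x s = (~~ (s a).1)%:R * x s.
Proof.
rewrite act_pair /= !state_upd_at /= jw_sign_upd ltnn mul1r.
case bit: (s a).1; first by rewrite !mul0r.
rewrite /clq_move /= !state_upd_at state_upd_upd jw_sign_sqr state_upd_self //.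
by rewrite [LHS]surjective_pairing bit.
Qed.

Lemma act_PsPh a x s : act [:: Ps a; Ph a] x s = (s a).1%:R * x s.
Proof.
rewrite act_pair /= !state_upd_at /= jw_sign_upd ltnn mul1r.
case bit: (s a).1; last by rewrite !mul0r.
rewrite /clq_move /= !state_upd_at state_upd_upd jw_sign_sqr state_upd_self //.
by rewrite [LHS]surjective_pairing bit.
Qed.

Lemma act_square_odd g x s : odd_gen g -> act [:: g; g] x s = 0.
Proof.
by case: g => // a _; rewrite act_pair /= state_upd_at /=; case: (s a).1; rewrite !(mul0r, mulr0).
Qed.

Lemma feval_Clq_rel r : Clq_rel q m r -> forall x s, eval r x s = 0.
Proof.
case=> a [b rel_ab] x s.
have act_m : act (Omp a m) x s = clq_weight (Om a) s ^+ m * x s.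
  by have := act_Om_pow_mulm a 1 x s; rewrite mul1n.
case: rel_ab => [|[|[|[|[|[|[|[|[ab]]]]]]]]] ->; rewrite !fevalE ?word_act_nil /w2.
- by case: (eqVneq a b) => [<- | ab]; rewrite ?subrr // act_swap // /swap_sign /= mul1r subrr.
- rewrite act_Om_pow_mulm act_m mulnC exprM.
  by case: (clq_weight_Om_pow_m a s) => ->; ring.
- case: (eqVneq a b) => [<- | ab]; first by rewrite act_OmPh subrr.
  by rewrite act_swap // /swap_sign /= subrr.
- case: (eqVneq a b) => [<- | ab]; first by rewrite act_OmPs subrr.
  by rewrite act_swap // /swap_sign /= subrr.
- case: (eqVneq a b) => [<- | ab]; first by rewrite act_square_odd // addr0.
  by rewrite act_swap // /swap_sign /= mulN1r addNr.
- case: (eqVneq a b) => [<- | ab]; first by rewrite act_square_odd // addr0.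
  by rewrite act_swap // /swap_sign /= mulN1r addNr.
- by rewrite act_PhPs act_PsPh; case: (s a).1 => /=; ring.
- rewrite act_PhPs act_PsPh act_m /=.
  by case: (s a).1 => /=; rewrite ?expr1n ?exprVn !(mul0r, mul1r, mulr0, add0r, addr0) ?subrr.
- by rewrite (@act_swap (Ph a) (Ps b) x s ab) /swap_sign /= mulN1r addNr.
Qed.

Definition block_move (y : bool * bool * 'I_m) t : bool * 'I_m :=
  (if y.1.2 then false else y.1.1 || t.1, ord_shift t.2 y.2).

Definition block_admissible (y : bool * bool * 'I_m) t : bool :=
  (y.1.1 ==> ~~ t.1) && (y.1.2 ==> y.1.1 || t.1).

Lemma jw_sign_neq0 s a : jw_sign s a != 0.
Proof. by apply: contra_eq_neq (jw_sign_sqr s a) => ->; rewrite mul0r eq_sym oner_neq0. Qed.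

Lemma clq_weight_Om_neq0 a s : clq_weight (Om a) s != 0.
Proof. by rewrite /=; case: (s a).1; rewrite ?invr_eq0 ?oner_eq0. Qed.

Lemma word_move_block a y s : mv (pbw_block a y) s = state_upd s a (block_move y (s a)).
Proof.
case: y => [[p d] v]; rewrite /pbw_block !word_move_cat word_move_Om_pow.
by case: p; case: d; rewrite /= /clq_move /= ?state_upd_at ?state_upd_upd.
Qed.

Lemma word_weight_block a y s : (wt (pbw_block a y) s != 0) = block_admissible y (s a).
Proof.
case: y => [[p d] v]; rewrite /pbw_block !word_weight_cat word_weight_Om_pow.
rewrite !mulf_eq0 !negb_or /= expf_neq0 ?clq_weight_Om_neq0 // andbT.
case: p; case: d; rewrite /block_admissible /= ?mulr1 /clq_move /= ?state_upd_at /=.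
all: by case: (s a).1; rewrite ?eqxx ?oner_eq0 ?jw_sign_neq0.
Qed.

Lemma word_blocks (i : pbw_index n m) (l : seq 'I_n) s : uniq l ->
  let w := flatten [seq pbw_block a (i a) | a <- l] in
  mv w s = [ffun a => if a \in l then block_move (i a) (s a) else s a] /\
  (wt w s != 0) = all (fun a => block_admissible (i a) (s a)) l.
Proof.
elim: l s => [|a l IH] s /=.
  by move=> _; split; [apply/ffunP => c; rewrite ffunE | rewrite oner_eq0].
case/andP => a_l uniq_l.
rewrite word_move_cat word_weight_cat mulf_eq0 negb_or word_weight_block word_move_block.
have [-> ->] := IH (state_upd s a (block_move (i a) (s a))) uniq_l.
have other c : c \in l -> state_upd s a (block_move (i a) (s a)) c = s c.
  by move=> c_l; rewrite state_upd_other //; apply: contraNneq a_l => <-.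
split; last by congr (_ && _); apply: eq_in_all => c /other ->.
apply/ffunP => c; rewrite [LHS]ffunE [RHS]ffunE in_cons.
have [-> | ca] := eqVneq c a; first by rewrite (negbTE a_l) state_upd_at.
by case: ifP => [/other -> | _]; rewrite // state_upd_other.
Qed.

Lemma word_move_pbw (i : pbw_index n m) s :
  mv (pbw_word i) s = [ffun a => block_move (i a) (s a)].
Proof.
have [-> _] := word_blocks i s (enum_uniq 'I_n).
by apply/ffunP => a; rewrite !ffunE mem_enum.
Qed.

Lemma word_weight_pbw (i : pbw_index n m) s :
  (wt (pbw_word i) s != 0) = [forall a, block_admissible (i a) (s a)].
Proof.
have [_ ->] := word_blocks i s (enum_uniq 'I_n).
by apply/allP/forallP => [adm a | adm a _]; [apply: adm; rewrite mem_enum | apply: adm].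
Qed.

(* From [probe_state i], [pbw_word i] reaches [probe_target i] with nonzero weight;
   another ordered monomial doing so differs from [i] only by trading factors
   phi_a phi*_a for 1 ([block_below]), so it has fewer [full_sites]. *)
Definition probe_state (i : pbw_index n m) : state := [ffun a => (~~ (i a).1.1, Ordinal m_gt0)].

Definition probe_target (i : pbw_index n m) : state := [ffun a => (~~ (i a).1.2, (i a).2)].

Definition probe (i : pbw_index n m) s : K := if s == probe_target i then 1 else 0.

Definition block_below (y' y : bool * bool * 'I_m) : bool :=
  (y'.2 == y.2) && ((y'.1 == y.1) || (y.1 == (true, true)) && (y'.1 == (false, false))).

Definition full_sites (i : pbw_index n m) : nat := #|[set a | (i a).1 == (true, true)]|.

Lemma ord_shift0l j : ord_shift (Ordinal m_gt0) j = j.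
Proof. by apply: val_inj; rewrite /= add0n modn_small. Qed.

Lemma probe_pbw_self i : act (pbw_word i) (probe i) (probe_state i) != 0.
Proof.
rewrite word_actE; have -> : mv (pbw_word i) (probe_state i) = probe_target i.
  apply/ffunP => a; rewrite word_move_pbw !ffunE /block_move ord_shift0l.
  by case: (i a) => [[[] []] v].
rewrite /probe eqxx mulr1 word_weight_pbw.
by apply/forallP => a; rewrite ffunE /block_admissible; case: (i a) => [[[] []] v].
Qed.

Lemma probe_pbw_below i' i : act (pbw_word i') (probe i) (probe_state i) != 0 ->
  forall a, block_below (i' a) (i a).
Proof.
rewrite word_actE /probe.
case: (mv (pbw_word i') (probe_state i) =P probe_target i) => [hit | _]; last first.
  by rewrite mulr0 eqxx.
rewrite mulr1 word_weight_pbw => /forallP adm a; move: {adm}(adm a).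
move: (congr1 (fun s : state => s a) hit); rewrite /= word_move_pbw !ffunE.
rewrite /block_move /block_admissible /block_below ord_shift0l.
case: (i' a) => [[p' d'] v']; case: (i a) => [[p d] v] /= [eq_bit ->]; rewrite eqxx /=.
by move: eq_bit; case: p; case: d; case: p'; case: d'.
Qed.

Lemma full_sites_below (i' i : pbw_index n m) : (forall a, block_below (i' a) (i a)) -> i' != i ->
  (full_sites i' < full_sites i)%N.
Proof.
move=> below neq_i; apply: proper_card; rewrite properEneq; apply/andP; split; last first.
  apply/subsetP => a; rewrite !inE => /eqP full_a.
  by move: (below a); rewrite /block_below full_a => /andP [_ /orP [/eqP <- | /andP []]].
apply: contra neq_i => /eqP same_full; apply/eqP/ffunP => a.
have /andP [/eqP eq_v below_a] := below a; apply: injective_projections => //.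
case/orP: below_a => [/eqP // | /andP [/eqP full_a _]].
have : a \in [set a | (i a).1 == (true, true)] by rewrite inE full_a.
by rewrite -same_full inE full_a => /eqP ->.
Qed.

Lemma pbw_free (c : {ffun pbw_index n m -> K}) :
  (forall x s, eval (pbw_comb c) x s = 0) -> forall i, c i = 0.
Proof.
move=> eval0.
have evalE x s :
    eval (pbw_comb c) x s = \sum_(i <- enum (pbw_index n m)) c i * act (pbw_word i) x s.
  by rewrite /feval flin_flatten big_map; apply: eq_bigr => i _; rewrite flin_scale flin_mono.
suff below k i : (full_sites i < k)%N -> c i = 0 by move=> i; apply: (below (full_sites i).+1).
elim: k i => // k IH i lt_ik.
have := eval0 (probe i) (probe_state i).
rewrite evalE (bigD1_seq i) ?mem_enum ?enum_uniq //= big1_seq ?addr0.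
  by move/eqP; rewrite mulf_eq0 (negbTE (probe_pbw_self i)) orbF => /eqP.
move=> i' /andP [neq_i _].
have [-> | nz] := eqVneq (act (pbw_word i') (probe i) (probe_state i)) 0; first by rewrite mulr0.
rewrite IH ?mul0r //.
exact: leq_trans (full_sites_below (probe_pbw_below nz) neq_i) lt_ik.
Qed.

End CliffordAction.

Theorem theorem5p2 (K : fieldType) (hchar : (2%:R : K) != 0)
  (q : K) (hq : q != 0) (n m : nat) (hn : (0 < n)%N) (hm : (0 < m)%N) :
  pbw_is_basis q n m.
Proof.
split=> [f | c ideal_c]; first exact: pbw_spanning.
apply: (@pbw_free _ _ _ _ hq hm).
exact: (feval_ideal (feval_Clq_rel hq hm) ideal_c).
Qed.
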